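(* Let $K$ be a convex body in $\mathbb{R}^d$, let $x$ be a regular boundary point of $K$ with exterior normal unit vector $\xi$, and let $U$ be an open neighborhood of the set $-S(K,-\xi)+x$. Then there is an open neighborhood $V$ of $x$ such that for every $t\in\mathbb{R}^d\setminus\Delta(K)$, if $K+t$ intersects $V$ then $t\in U$.
   Context: A convex body is a compact convex set with nonempty interior. A boundary point is regular if $K$ has a unique support hyperplane there; its exterior normal unit vector $\xi$ satisfies $K\subset\{z:\langle z,\xi\rangle\le\langle x,\xi\rangle\}$. For a unit vector $\eta$, $S(K,\eta)=K\cap H(K,\eta)$, where $H(K,\eta)$ is the support hyperplane of $K$ with exterior normal $\eta$ (i.e. $S(K,\eta)$ is the set of maximizers of $\langle\cdot,\eta\rangle$ on $K$). $\Delta(K)=\{y: m(K\cap(K+y))>0\}$, $m$ Lebesgue measure. *)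

From HB Require Import structures.
From mathcomp Require Import all_boot all_order all_algebra.
From mathcomp Require Import all_classical all_reals all_analysis.
Set Implicit Arguments. Unset Strict Implicit. Unset Printing Implicit Defensive.
Import Order.TTheory GRing.Theory Num.Theory.
Import numFieldNormedType.Exports.
Local Open Scope classical_set_scope.
Local Open Scope ring_scope.

(* Points of R^d are row vectors 'rV[R]_d; coordinates are [z ord0 i]. *)

Definition dotv {R : realType} {d : nat} (z w : 'rV[R]_d) : R :=
  \sum_(i < d) z ord0 i * w ord0 i.

Definition unit_vec {R : realType} {d : nat} (u : 'rV[R]_d) : Prop :=
  dotv u u = 1.

Definition convex_set {R : realType} {d : nat} (K : set 'rV[R]_d) : Prop :=
  forall x y, K x -> K y -> forall l : R, 0 <= l -> l <= 1 ->
    K (l *: x + (1 - l) *: y).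

Definition convex_body {R : realType} {d : nat} (K : set 'rV[R]_d) : Prop :=
  [/\ compact K, convex_set K & (K°) !=set0].

Definition ext_normal {R : realType} {d : nat} (K : set 'rV[R]_d)
  (x xi : 'rV[R]_d) : Prop :=
  forall z, K z -> dotv z xi <= dotv x xi.

(** regular boundary point: boundary point with a unique support hyperplane,
    i.e. a unique exterior unit normal *)
Definition regular_point {R : realType} {d : nat} (K : set 'rV[R]_d)
  (x : 'rV[R]_d) : Prop :=
  [/\ K x, ~ (K°) x &
      exists! xi : 'rV[R]_d, unit_vec xi /\ ext_normal K x xi].

Definition support_set {R : realType} {d : nat} (K : set 'rV[R]_d)
  (eta : 'rV[R]_d) : set 'rV[R]_d :=
  [set y | K y /\ forall z, K z -> dotv z eta <= dotv y eta].

Definition translate {R : realType} {d : nat} (K : set 'rV[R]_d)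
  (y : 'rV[R]_d) : set 'rV[R]_d := [set z | K (z - y)].

(** Lebesgue (outer) measure on R^d, via countable covers by closed boxes *)
Definition box {R : realType} {d : nat} (a b : 'rV[R]_d) : set 'rV[R]_d :=
  [set z | forall i : 'I_d, a ord0 i <= z ord0 i <= b ord0 i].

Definition box_vol {R : realType} {d : nat} (a b : 'rV[R]_d) : R :=
  \prod_(i < d) Num.max 0 (b ord0 i - a ord0 i).

Definition lebesgue_outer {R : realType} {d : nat} (A : set 'rV[R]_d) : \bar R :=
  ereal_inf [set s : \bar R | exists (a b : nat -> 'rV[R]_d),
     A `<=` \bigcup_n box (a n) (b n) /\
     s = (\sum_(0 <= n <oo) ((box_vol (a n) (b n))%:E))%E].

Definition Delta {R : realType} {d : nat} (K : set 'rV[R]_d) : set 'rV[R]_d :=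
  [set y | (0 < lebesgue_outer (K `&` translate K y))%E].

From Pilot Require Import Defs.
From HB Require Import structures.
From mathcomp Require Import all_boot all_order all_algebra.
From mathcomp Require Import all_classical all_reals all_analysis.
From mathcomp Require Import measurable_realfun ring lra.
Import Order.TTheory GRing.Theory Num.Theory.
Import numFieldNormedType.Exports.
Local Open Scope classical_set_scope.
Local Open Scope ring_scope.

(* Let D = K - K, a compact convex set, and let k be a point of K.  If x - k lies
   on the boundary of D, a support hyperplane of D at x - k supports K at x and at
   k with opposite normals; by regularity of x its normal is xi, so k lies in
   S(K, -xi) and x - k lies in U.  If x - k is interior to D, then
   (1 + eps) (x - k) = a - b with a, b in K, and shrinking a and b towards an
   interior point of K by a common factor yields a ball in K and in K + (x - k);
   hence K and K + t share a ball, i.e. t lies in Delta(K), for all t near x - k.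
   So Delta(K) u U is a neighbourhood of x - k for every k in K, and compactness
   of K makes the corresponding neighbourhood of x uniform in k. *)

Section box_cover.
Context {R : realType}.
Local Open Scope ereal_scope.

Lemma lebesgue_measure_itv_cc (a b : R) :
  lebesgue_measure `[a, b]%classic = (Num.max 0 (b - a))%:E.
Proof.
rewrite lebesgue_measure_itv /= lte_fin.
case: ltP => [ab|ba]; first by rewrite -EFinB (max_idPr _) // subr_ge0 ltW.
by rewrite (max_idPl _) // subr_le0.
Qed.

Definition nat_box_volume (m : nat) (a b : nat -> R) : R :=
  (\prod_(0 <= i < m) Num.max 0 (b i - a i))%R.

Lemma nat_box_volume_ge0 m (a b : nat -> R) : (0 <= nat_box_volume m a b)%R.
Proof. by apply: prodr_ge0 => i _; rewrite le_max lexx. Qed.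

Lemma nat_box_volumeS m (a b : nat -> R) :
  nat_box_volume m.+1 a b = (nat_box_volume m a b * Num.max 0 (b m - a m))%R.
Proof. exact: big_nat_recr. Qed.

Lemma integral_sum_indic_itv_le (l u : R) (c : nat -> R) (a b : nat -> R) :
  (forall n, 0 <= c n)%R ->
  \int[lebesgue_measure]_(y in `[l, u]) \sum_(0 <= n <oo) (c n * \1_`[a n, b n] y)%:E
    <= \sum_(0 <= n <oo) (c n * Num.max 0 (b n - a n))%:E.
Proof.
move=> c0.
have mI n : measurable (`[a n, b n]%classic : set R) by exact: measurable_itv.
rewrite integral_nneseries //; last first.
- by move=> n y _; rewrite lee_fin mulr_ge0.
- move=> n; apply/measurable_EFinP/measurable_funM; first exact: measurable_cst.
  exact: measurable_indic.
apply: lee_nneseries => [n _ _|n _].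
  by apply: integral_ge0 => y _; rewrite lee_fin mulr_ge0.
under eq_integral do rewrite EFinM.
rewrite ge0_integralZl_EFin //; last exact/measurable_EFinP/measurable_indic.
rewrite integral_indic // EFinM; apply: lee_wpmul2l; first by rewrite lee_fin.
by rewrite -lebesgue_measure_itv_cc le_measure ?inE //; exact: measurableI.
Qed.

Definition nat_box_cover m (l u : nat -> R) (a b : nat -> nat -> R) (P : pred nat)
    : Prop :=
  forall z : nat -> R, (forall i, (i < m)%N -> l i <= z i <= u i)%R ->
    exists2 n, P n & forall i, (i < m)%N -> (a n i <= z i <= b n i)%R.

Lemma nat_box_cover_fibre {m l u a b P y} :
  nat_box_cover m.+1 l u a b P -> (l m <= y <= u m)%R ->
  nat_box_cover m l u a b (fun n => P n && (a n m <= y <= b n m)%R).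
Proof.
move=> cover ly z zlu.
have [|n Pn abn] := cover (fun i => if i == m then y else z i).
  move=> i; rewrite ltnS leq_eqVlt => /orP[/eqP->|im]; first by rewrite eqxx.
  by rewrite ltn_eqF //; apply: zlu.
exists n; first by rewrite Pn; have := abn m (ltnSn m); rewrite eqxx.
by move=> i im; have := abn i (ltnW im); rewrite ltn_eqF.
Qed.

Lemma nneseries_ge_term (u : nat -> \bar R) n :
  (forall k, 0 <= u k) -> u n <= \sum_(0 <= k <oo) u k.
Proof.
move=> u_ge0; apply: le_trans (nneseries_lim_ge n.+1 (fun k _ _ => u_ge0 k)).
by rewrite big_nat_recr //= leeDr //; apply: sume_ge0.
Qed.

(* Integrate over the last coordinate the bound for the fibres, each covered by
   the boxes of the cover that meet it; this is why covers carry a selection. *)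
Lemma nat_box_volume_le_cover m l u a b P : nat_box_cover m l u a b P ->
  (nat_box_volume m l u)%:E <=
    \sum_(0 <= n <oo) (if P n then nat_box_volume m (a n) (b n) else 0)%:E.
Proof.
elim: m => [|m IH] in P * => cover.
  have [n Pn _] := cover (fun=> 0%R) (fun i (i0 : (i < 0)%N) => ltac:(by [])).
  apply: le_trans (nneseries_ge_term _ n _).
    by rewrite Pn /nat_box_volume !big_geq.
  by move=> k; case: (P k); rewrite lee_fin ?nat_box_volume_ge0.
pose c n := (if P n then nat_box_volume m (a n) (b n) else 0)%R.
have c_ge0 n : (0 <= c n)%R by rewrite /c; case: (P n); rewrite ?nat_box_volume_ge0.
have fibre_bound y : (l m <= y <= u m)%R ->
    (nat_box_volume m l u)%:E <=
    \sum_(0 <= n <oo) (c n * \1_`[a n m, b n m] y)%:E.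
  move=> ly; apply: le_trans (IH _ (nat_box_cover_fibre cover ly)) _.
  apply: lee_nneseries => n _; first by case: ifP; rewrite lee_fin ?nat_box_volume_ge0.
  rewrite /c indicE mem_setE in_itv /=.
  by case: (P n); case: (a n m <= y <= b n m)%R; rewrite /= ?mulr1 ?mulr0 ?mul0r.
have mI : measurable (`[l m, u m]%classic : set R) by exact: measurable_itv.
rewrite nat_box_volumeS EFinM -lebesgue_measure_itv_cc.
rewrite -(integral_cst (@lebesgue_measure R) mI).
apply: le_trans (_ : \int[lebesgue_measure]_(y in `[l m, u m])
  \sum_(0 <= n <oo) (c n * \1_`[a n m, b n m] y)%:E <= _).
  apply: ge0_le_integral.
  - exact: mI.
  - by move=> y _; rewrite lee_fin nat_box_volume_ge0.
  - exact: measurable_cst.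
  - apply: ge0_emeasurable_sum => [n y _|n _]; first by rewrite lee_fin mulr_ge0.
    apply/measurable_EFinP/measurable_funM; first exact: measurable_cst.
    by apply: measurable_indic; exact: measurable_itv.
  - exact: fibre_bound.
apply: le_trans (integral_sum_indic_itv_le (l m) (u m) c (a^~ m) (b^~ m) c_ge0) _.
apply: lee_nneseries => n _; first by rewrite lee_fin mulr_ge0 // le_max lexx.
by rewrite nat_box_volumeS /c; case: (P n); rewrite ?mul0r.
Qed.

End box_cover.

Section outer_measure.
Context {R : realType} {d : nat}.

(* Coordinates indexed by [nat], with junk value [0] from [d] on, so that box
   volumes can be handled by induction on the dimension. *)
Definition nat_coord (v : 'rV[R]_d) (i : nat) : R :=
  if insub i is Some j then v ord0 j else 0.

Lemma nat_coordE (v : 'rV[R]_d) (j : 'I_d) : nat_coord v j = v ord0 j.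
Proof. by rewrite /nat_coord valK. Qed.

Lemma box_vol_nat (a b : 'rV[R]_d) :
  box_vol a b = nat_box_volume d (nat_coord a) (nat_coord b).
Proof.
by rewrite /nat_box_volume big_mkord; apply: eq_bigr => i _; rewrite !nat_coordE.
Qed.

Lemma lebesgue_outer_gt0 (A : set 'rV[R]_d) (c : 'rV[R]_d) (r : R) :
  0 < r -> ball c r `<=` A -> (0 < lebesgue_outer A)%E.
Proof.
move=> r0 cA; pose l i := nat_coord c i - r / 2; pose u i := nat_coord c i + r / 2.
apply: (@lt_le_trans _ _ (nat_box_volume d l u)%:E).
  rewrite lte_fin; apply: prodr_gt0 => i _.
  by rewrite lt_max /u /l; apply/orP; right; lra.
apply: le_ereal_inf_tmp => _ [a [b [Acover ->]]].
rewrite (eq_eseriesr (fun n _ => congr1 EFin (box_vol_nat (a n) (b n)))).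
apply: (nat_box_volume_le_cover d l u (fun n => nat_coord (a n))
  (fun n => nat_coord (b n)) predT) => z zlu.
have [|n _ abn] := Acover (\row_j z j).
  apply: cA; split=> // i j; rewrite (ord1 i) -ball_normE /= mxE.
  have := zlu j (ltn_ord j); rewrite /l /u nat_coordE ltr_distlC; lra.
exists n => // i di; have := abn (Ordinal di).
by rewrite mxE -!(nat_coordE _ (Ordinal di)).
Qed.

End outer_measure.

Section inner_product.
Context {R : realType} {d : nat}.
Implicit Types (u v w : 'rV[R]_d) (k : R).

Lemma dotvC u v : dotv u v = dotv v u.
Proof. by apply: eq_bigr => i _; rewrite mulrC. Qed.

Lemma dotvDl u v w : dotv (u + v) w = dotv u w + dotv v w.
Proof. by rewrite /dotv -big_split; apply: eq_bigr => i _; rewrite mxE mulrDl. Qed.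

Lemma dotvZl k u w : dotv (k *: u) w = k * dotv u w.
Proof. by rewrite /dotv mulr_sumr; apply: eq_bigr => i _; rewrite mxE mulrA. Qed.

Lemma dotvNl u w : dotv (- u) w = - dotv u w.
Proof. by rewrite -scaleN1r dotvZl mulN1r. Qed.

Lemma dotvBl u v w : dotv (u - v) w = dotv u w - dotv v w.
Proof. by rewrite dotvDl dotvNl. Qed.

Lemma dotvDr u v w : dotv w (u + v) = dotv w u + dotv w v.
Proof. by rewrite dotvC dotvDl !(dotvC w). Qed.

Lemma dotvZr k u w : dotv w (k *: u) = k * dotv w u.
Proof. by rewrite dotvC dotvZl dotvC. Qed.

Lemma dotvNr u w : dotv w (- u) = - dotv w u.
Proof. by rewrite dotvC dotvNl dotvC. Qed.

Lemma dotv0r u : dotv u 0 = 0.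
Proof. by rewrite /dotv big1 // => i _; rewrite mxE mulr0. Qed.

Lemma dotv_sqrDZ k u w :
  dotv (u + k *: w) (u + k *: w) = dotv u u + 2 * k * dotv u w + k ^+ 2 * dotv w w.
Proof. by rewrite dotvDl !dotvDr !dotvZl !dotvZr (dotvC w u); ring. Qed.

Lemma dotv_ge0 u : 0 <= dotv u u.
Proof. by apply: sumr_ge0 => i _; rewrite -expr2 sqr_ge0. Qed.

Lemma dotv_gt0 u : u != 0 -> 0 < dotv u u.
Proof.
move=> u_neq0; rewrite lt_def dotv_ge0 andbT; apply: contraNneq u_neq0 => /eqP.
rewrite psumr_eq0 => [/allP u0|i _]; last by rewrite -expr2 sqr_ge0.
apply/eqP/rowP => i; rewrite mxE; apply/eqP.
by have := u0 i (mem_index_enum i); rewrite /= mulf_eq0 orbb.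
Qed.

Lemma coord_le_norm v (j : 'I_d) : `|v ord0 j| <= `|v|.
Proof. by rewrite [leRHS]mx_normrE; exact: (le_bigmax _ _ (ord0, j)). Qed.

(* [`|u|] is the sup norm of the row vector [u], hence the factor [d]. *)
Lemma dotv_norm_le u v : `|dotv u v| <= d%:R * (`|u| * `|v|).
Proof.
apply: le_trans (ler_norm_sum _ _ _) _.
apply: le_trans (_ : _ <= \sum_(i < d) `|u| * `|v|) _.
  by apply: ler_sum => i _; rewrite normrM ler_pM ?coord_le_norm.
by rewrite sumr_const card_ord mulr_natl.
Qed.

Lemma continuous_dotv (T : topologicalType) (f g : T -> 'rV[R]_d) :
  continuous f -> continuous g -> continuous (fun t => dotv (f t) (g t)).
Proof.
move=> cf cg; apply: continuous_big => [|i _]; first exact: add_continuous.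
move=> t; apply: continuousM.
  exact: (continuous_comp (cf t) (@coord_continuous _ _ _ ord0 i (f t))).
exact: (continuous_comp (cg t) (@coord_continuous _ _ _ ord0 i (g t))).
Qed.

End inner_product.

Section separation.
Context {R : realType} {d : nat}.
Implicit Types (D : set 'rV[R]_d) (p q z : 'rV[R]_d).

Lemma nearest_point_dotv_ge0 {D q z0} : Defs.convex_set D -> D z0 ->
    (forall z, D z -> dotv (z0 - q) (z0 - q) <= dotv (z - q) (z - q)) ->
  forall z, D z -> 0 <= dotv (z0 - q) (z - z0).
Proof.
move=> convD Dz0 z0_min z Dz; rewrite leNgt; apply/negP => a_lt0.
set a := dotv (z0 - q) (z - z0) in a_lt0.
have b_ge0 := dotv_ge0 (z - z0); set b := dotv (z - z0) (z - z0) in b_ge0.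
pose l := Num.min 1 (- a / (b + 1)).
have l_gt0 : 0 < l by rewrite lt_min ltr01 divr_gt0 // ?oppr_gt0 // ltr_wpDl.
have l_le1 : l <= 1 by rewrite ge_min lexx.
have l_le : l * (b + 1) <= - a by rewrite -ler_pdivlMr ?ltr_wpDl // ge_min lexx orbT.
have := z0_min _ (convD _ _ Dz Dz0 l (ltW l_gt0) l_le1).
have -> : l *: z + (1 - l) *: z0 - q = (z0 - q) + l *: (z - z0).
  by apply/rowP => i; rewrite !mxE; ring.
rewrite dotv_sqrDZ -/a -/b.
nra.
Qed.

Lemma separate_point_compact_convex {D q} : compact D -> Defs.convex_set D ->
  D !=set0 -> ~ D q -> exists eta, forall z, D z -> dotv (z - q) eta < 0.
Proof.
move=> cD convD D0 Dq.
have cont : {within D, continuous (fun z => dotv (z - q) (z - q))}.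
  have cq : continuous (fun z => z - q).
    by move=> z; apply: (@cvgB _ _ _ (nbhs z)); [exact: cvg_id|exact: cvg_cst].
  by apply: continuous_subspaceT; apply: continuous_dotv.
have [z0 /set_mem Dz0 z0_min] := EVT_min_rV D0 cD cont.
have z0_min' z : D z -> dotv (z0 - q) (z0 - q) <= dotv (z - q) (z - q).
  by move=> Dz; apply: z0_min; rewrite inE.
have z0q : z0 - q != 0 by rewrite subr_eq0; apply: contra_not_neq Dq => <-.
exists (q - z0) => z Dz.
have := nearest_point_dotv_ge0 convD Dz0 z0_min' _ Dz.
have -> : z - q = (z - z0) + (z0 - q) by rewrite addrA subrK.
have -> : q - z0 = - (z0 - q) by rewrite opprB.
move: (z - z0) (z0 - q) z0q => w u /dotv_gt0 u_gt0 uw_ge0.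
rewrite dotvDl !dotvNr (dotvC w); lra.
Qed.

Lemma compact_unit_sphere : compact [set eta : 'rV[R]_d | `|eta| = 1].
Proof.
apply: bounded_closed_compact.
  by exists 1; split=> // M M1 eta /= ->; exact: ltW.
apply: (@preimage_closed _ _ (fun eta : 'rV[R]_d => `|eta|) [set x | x = 1]).
  by move=> eta _; exact: norm_continuous.
exact: closed_eq.
Qed.

Lemma unit_sphere_dotv_gt0_uniform {D p} :
    (forall eta, `|eta| = 1 -> exists2 z, D z & 0 < dotv (z - p) eta) ->
  exists2 r, 0 < r & forall eta, `|eta| = 1 -> exists2 z, D z & r < dotv (z - p) eta.
Proof.
move=> pos.
have := proj1 (compact_near_coveringP _) compact_unit_sphere nat \oo
  (fun n eta => exists2 z, D z & n.+1%:R^-1 < dotv (z - p) eta) _.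
case=> [eta /pos [z Dz a_gt0]|N _ /(_ N (leqnn N)) uniform].
  have cont : continuous (fun e => dotv (z - p) e).
    by apply: continuous_dotv; [exact: cst_continuous | move=> e; exact: cvg_id].
  near=> eta' n; exists z => //=; apply: (@lt_trans _ _ (dotv (z - p) eta / 2)).
    by near: n; exact: (near_infty_natSinv_lt (PosNum (divr_gt0 a_gt0 (@ltr0Sn R 1)))).
  near: eta'; apply: (cvgr_gt _ (cont eta)); rewrite ltr_pdivrMr //; lra.
by exists N.+1%:R^-1.
Unshelve. all: by end_near.
Qed.

(* Otherwise every unit direction exposes a point of [D] beyond [p], uniformly by
   compactness of the sphere, which a hyperplane separating [D] from a point
   outside [D] close to [p] contradicts. *)
Lemma support_hyperplane {D p} : compact D -> Defs.convex_set D -> D p -> ~ (D°) p ->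
  exists2 eta, eta != 0 & forall z, D z -> dotv (z - p) eta <= 0.
Proof.
move=> cD convD Dp p_bd; apply: contrapT => no_normal.
have pos eta : `|eta| = 1 -> exists2 z, D z & 0 < dotv (z - p) eta.
  move=> eta1; apply: contrapT => none; apply: no_normal; exists eta.
    by apply: contraPneq eta1 => ->; rewrite normr0 => /esym/eqP; rewrite oner_eq0.
  by move=> z Dz; rewrite leNgt; apply/negP => gt0; apply: none; exists z.
have [r r_gt0 uniform] := unit_sphere_dotv_gt0_uniform pos.
pose rho := r / (d%:R + 1).
have rho_gt0 : 0 < rho by rewrite divr_gt0 // ltr_wpDl.
have [q pq Dq] : exists2 q, `|p - q| < rho & ~ D q.
  apply: contrapT => near_in; apply: p_bd; apply/nbhs_ballP; exists rho => // q.
  by rewrite -ball_normE /= => pq; apply: contrapT => Dq; apply: near_in; exists q.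
have [eta0 sep] := separate_point_compact_convex cD convD (ex_intro _ p Dp) Dq.
have eta0_gt0 : 0 < `|eta0|.
  by rewrite normr_gt0; apply: contraTneq (sep p Dp) => ->; rewrite dotv0r ltxx.
pose eta := `|eta0|^-1 *: eta0.
have eta1 : `|eta| = 1 by rewrite normrZ normfV normr_id mulVf ?gt_eqF.
have [z Dz] := uniform eta eta1.
have -> : dotv (z - p) eta = `|eta0|^-1 * dotv (z - q) eta0 + dotv (q - p) eta.
  by rewrite -dotvZr -dotvDl addrA subrK.
have : `|eta0|^-1 * dotv (z - q) eta0 < 0 by rewrite pmulr_rlt0 ?invr_gt0 ?sep.
have : dotv (q - p) eta <= d%:R * rho.
  apply: le_trans (ler_norm _) (le_trans (dotv_norm_le _ _) _).
  by rewrite eta1 mulr1 distrC ler_wpM2l // ltW.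
have : d%:R * rho < r by rewrite /rho mulrA ltr_pdivrMr ?ltr_wpDl //; nra.
lra.
Qed.

End separation.

Section convex_geometry.
Context {R : realType} {d : nat}.
Implicit Types (K : set 'rV[R]_d) (a b c k s x xi : 'rV[R]_d).

Definition diff_body K : set 'rV[R]_d := [set ab.1 - ab.2 | ab in K `*` K].

Lemma compact_diff_body {K} : compact K -> compact (diff_body K).
Proof.
move=> cK; apply: continuous_compact; last exact: compact_setX.
by apply: continuous_subspaceT; exact: sub_continuous.
Qed.

Lemma convex_diff_body {K} : Defs.convex_set K -> Defs.convex_set (diff_body K).
Proof.
move=> convK _ _ [[a b] [/= Ka Kb] <-] [[a' b'] [/= Ka' Kb'] <-] l l0 l1.
exists (l *: a + (1 - l) *: a', l *: b + (1 - l) *: b'); first by split; apply: convK.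
by apply/rowP => i; rewrite !mxE; ring.
Qed.

Lemma convex_ball_shrink {K c a} {r l : R} : Defs.convex_set K ->
  ball c r `<=` K -> K a -> 0 < l <= 1 -> ball (l *: c + (1 - l) *: a) (l * r) `<=` K.
Proof.
move=> convK cK Ka /andP[l_gt0 l_le1] v.
pose u := l^-1 *: (v - (1 - l) *: a).
have -> : v = l *: u + (1 - l) *: a by rewrite scalerA mulfV ?gt_eqF // scale1r subrK.
rewrite -ball_normE /=.
have -> : l *: c + (1 - l) *: a - (l *: u + (1 - l) *: a) = l *: (c - u).
  by rewrite opprD addrACA subrr addr0 scalerBr.
rewrite normrZ gtr0_norm // ltr_pM2l // => cu.
by apply: convK => //; [apply: cK; rewrite -ball_normE | exact: ltW].
Qed.

Lemma regular_ext_normal {K x xi eta} : regular_point K x -> unit_vec xi ->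
  ext_normal K x xi -> eta != 0 -> ext_normal K x eta ->
  exists2 n : R, 0 < n & eta = n *: xi.
Proof.
move=> [_ _ [xi0 [_ xi0_uniq]]] xi1 nxi eta_neq0 neta.
pose n := Num.sqrt (dotv eta eta).
have n_gt0 : 0 < n by rewrite sqrtr_gt0 dotv_gt0.
have nu1 : unit_vec (n^-1 *: eta).
  rewrite /unit_vec dotvZl dotvZr -[dotv eta eta]sqr_sqrtr ?dotv_ge0 // -/n.
  by field; rewrite gt_eqF.
have nnu : ext_normal K x (n^-1 *: eta).
  move=> z Kz; rewrite !dotvZr.
  by apply: ler_wpM2l; [rewrite invr_ge0 ltW | exact: neta].
exists n => //.
rewrite -(xi0_uniq _ (conj xi1 nxi)) (xi0_uniq _ (conj nu1 nnu)).
by rewrite scalerA mulfV ?gt_eqF // scale1r.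
Qed.

Lemma diff_body_boundary_support {K x xi k} : compact K -> Defs.convex_set K ->
  regular_point K x -> unit_vec xi -> ext_normal K x xi -> K k ->
  ~ (diff_body K)° (x - k) -> support_set K (- xi) k.
Proof.
move=> cK convK reg xi1 nxi Kk bd; have [Kx _ _] := reg.
have Dxk : diff_body K (x - k) by exists (x, k).
have [eta eta_neq0 supp] :=
  support_hyperplane (compact_diff_body cK) (convex_diff_body convK) Dxk bd.
have supp_diff a b : K a -> K b -> dotv (a - b) eta <= dotv (x - k) eta.
  by move=> Ka Kb; rewrite -subr_le0 -dotvBl; apply: supp; exists (a, b).
have neta : ext_normal K x eta.
  by move=> a Ka; have := supp_diff _ _ Ka Kk; rewrite !dotvBl lerD2r.
have [n n_gt0 etaE] := regular_ext_normal reg xi1 nxi eta_neq0 neta.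
split=> // b Kb; rewrite !dotvNr lerN2.
have := supp_diff _ _ Kx Kb; rewrite !dotvBl lerD2l lerN2 etaE !dotvZr.
by rewrite ler_pM2l.
Qed.

(* With [(1 + eps) s = a - b] for [a, b] in [K], shrinking [a] and [b] towards
   [c] by the factor [1 - l = 1 / (1 + eps)] gives two balls in [K] that differ by
   the translation [s]. *)
Lemma diff_body_interior_ball {K c} {r : R} {s} : Defs.convex_set K ->
  0 < r -> ball c r `<=` K -> (diff_body K)° s ->
  exists p (rho : R), 0 < rho /\ ball p rho `<=` K `&` translate K s.
Proof.
move=> convK r_gt0 cK /nbhs_ballP[e /= e_gt0 sD].
pose eps := e / (`|s| + 1); pose l := eps / (1 + eps).
have s1_gt0 : 0 < `|s| + 1 by rewrite ltr_wpDl.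
have eps_gt0 : 0 < eps by rewrite divr_gt0.
have eps1_gt0 : 0 < 1 + eps by rewrite addr_gt0.
have l_gt0 : 0 < l by rewrite divr_gt0.
have l_le1 : l <= 1 by rewrite ler_pdivrMr // mul1r lerDr.
have [[a b] [/= Ka Kb] abE] : diff_body K ((1 + eps) *: s).
  apply: sD; rewrite -ball_normE /= -{1}[s]scale1r -scalerBl opprD addNKr normrZ normrN.
  by rewrite gtr0_norm // /eps mulrAC ltr_pdivrMr // ltr_pM2l // ltrDl.
have sE : (1 - l) *: (a - b) = s.
  by rewrite abE scalerA -[RHS]scale1r /l; congr (_ *: _); field; rewrite gt_eqF.
have l01 : 0 < l <= 1 by rewrite l_gt0.
exists (l *: c + (1 - l) *: a), (l * r); split; first exact: mulr_gt0.
move=> v pv; split; first exact: (convex_ball_shrink convK cK Ka l01).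
rewrite /translate /=; apply: (convex_ball_shrink convK cK Kb l01).
move: pv; rewrite -!ball_normE /= -sE.
suff -> : l *: c + (1 - l) *: b - (v - (1 - l) *: (a - b)) =
          l *: c + (1 - l) *: a - v by [].
by apply/rowP => i; rewrite !mxE; ring.
Qed.

End convex_geometry.

Section delta.
Context {R : realType} {d : nat}.
Implicit Types (K : set 'rV[R]_d) (k p s x : 'rV[R]_d).

Lemma ball_sub_Delta {K p s} {rho : R} : 0 < rho ->
  ball p rho `<=` K `&` translate K s -> ball s (rho / 2) `<=` Delta K.
Proof.
move=> rho_gt0 pK t; rewrite -ball_normE /= => st.
apply: (@lebesgue_outer_gt0 _ _ _ p (rho / 2)); first by rewrite divr_gt0.
move=> v; rewrite -ball_normE /= => pv.
have pv' : ball p rho v by rewrite -ball_normE /=; lra.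
have pvst : ball p rho (v + (s - t)).
  rewrite -ball_normE /= opprD addrA.
  by apply: le_lt_trans (ler_normB _ _) _; lra.
split; first by case: (pK _ pv').
by have [_] := pK _ pvst; rewrite /translate /= [s - t]addrC addrA addrK.
Qed.

Lemma nbhs_Delta_setU {K x xi} {U : set 'rV[R]_d} {k} : convex_body K ->
  regular_point K x -> unit_vec xi -> ext_normal K x xi -> open U ->
  [set x - y | y in support_set K (- xi)] `<=` U -> K k ->
  nbhs (x - k) (Delta K `|` U).
Proof.
move=> [cK convK [c /nbhs_ballP[r r_gt0 cr]]] reg xi1 nxi oU SU Kk.
have [/(diff_body_interior_ball convK r_gt0 cr) [p [rho [rho_gt0 pK]]]|bd] :=
  pselect ((diff_body K)° (x - k)).
  apply/nbhs_ballP; exists (rho / 2); first by rewrite /= divr_gt0.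
  by move=> t /(ball_sub_Delta rho_gt0 pK); left.
have Sk := diff_body_boundary_support cK convK reg xi1 nxi Kk bd.
by apply: filterS (oU _ (SU _ (ex_intro2 _ _ k Sk erefl))) => t; right.
Qed.

Lemma near_translates_compact {K} {A : set 'rV[R]_d} {x} : compact K ->
  (forall k, K k -> nbhs (x - k) A) -> \forall z \near x, forall k, K k -> A (z - k).
Proof.
move=> cK xkA.
apply: (proj1 (compact_near_coveringP K) cK _ (nbhs x) (fun z k => A (z - k))) => k Kk.
have sub_cont : (fun kz => kz.2 - kz.1) @ (nbhs k, nbhs x) --> x - k.
  by apply: cvgB; [exact: cvg_snd | exact: cvg_fst].
exact: sub_cont (xkA k Kk).
Qed.

End delta.

Theorem lemma4p3 (R : realType) (d : nat) (K : set 'rV[R]_d)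
  (x xi : 'rV[R]_d) (U : set 'rV[R]_d) :
  convex_body K ->
  regular_point K x ->
  unit_vec xi -> ext_normal K x xi ->
  open U ->
  [set x - y | y in support_set K (- xi)] `<=` U ->
  exists V : set 'rV[R]_d, [/\ open V, V x &
    forall t : 'rV[R]_d, ~ Delta K t ->
      translate K t `&` V !=set0 -> U t].
Proof.
move=> cb reg xi1 nxi oU SU; have [cK _ _] := cb.
have /nbhs_ballP[e e_gt0 near_x] := near_translates_compact cK
  (fun k Kk => nbhs_Delta_setU cb reg xi1 nxi oU SU Kk).
exists (ball x e); split; [exact: ball_open | exact: ballxx |].
move=> t not_Delta [z [Kzt xz]].
by have [|//] := near_x z xz (z - t) Kzt; rewrite opprB addrC subrK.
Qed.
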